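(* Let $n\ge 1$, $m\ge 1$, and let $\lambda=(\lambda_1,\ldots,\lambda_n)\in\mathbb{R}_{<0}^n$ (not necessarily distinct). Consider the $n$-th order linear system $$x^{(n)}=-\kappa_{0,\lambda}x^{(0)}-\kappa_{1,\lambda}x^{(1)}-\cdots-\kappa_{n-1,\lambda}x^{(n-1)},\qquad x(t)\in\mathbb{R}^m,$$ whose characteristic polynomial $s^n+\sum_{k=0}^{n-1}\kappa_{k,\lambda}s^k$ has roots $\lambda_1,\ldots,\lambda_n$. Let $x(t)$ be its solution starting at $t=0$ from an arbitrary initial state $(x^{(0)}_0,\ldots,x^{(n-1)}_0)\in\mathbb{R}^{n\times m}$. Let $\lambda_{\neg\max}$ be the $(n-1)$-tuple obtained from $\lambda$ by removing one entry equal to $\max(\lambda_1,\ldots,\lambda_n)$. Then for all $t\ge 0$, $$x(t)\in\operatorname{conv}\left\{\sum_{j=0}^{i-1}\frac{\kappa_{j,\lambda_{\neg\max}}}{\kappa_{0,\lambda_{\neg\max}}}x^{(j)}_0 \;:\; i=0,1,\ldots,n\right\},$$ i.e. $x(t)$ lies in the convex hull of $0,\ x^{(0)}_0,\ x^{(0)}_0+\frac{\kappa_{1,\lambda_{\neg\max}}}{\kappa_{0,\lambda_{\neg\max}}}x^{(1)}_0,\ \ldots,\ \sum_{j=0}^{n-1}\frac{\kappa_{j,\lambda_{\neg\max}}}{\kappa_{0,\lambda_{\neg\max}}}x^{(j)}_0$.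
   Context: $x^{(k)}$ denotes the $k$-th time derivative of $x$. For a finite tuple $\mu=(\mu_1,\ldots,\mu_p)$ of complex numbers (possibly empty, $p=0$), the companion coefficients are $\kappa_{k,\mu}=(-1)^{p-k}\sum_{I\subseteq\{1,\ldots,p\},\,|I|=p-k}\prod_{i\in I}\mu_i$ for $0\le k\le p$ (empty sum $=0$, empty product $=1$), so that $\prod_{i=1}^p(s-\mu_i)=\sum_{k=0}^{p}\kappa_{k,\mu}s^k$ and $\kappa_{p,\mu}=1$; also $\kappa_{k,\mu}=0$ for $k\notin\{0,\ldots,p\}$. An empty sum of vectors is $0$. $\operatorname{conv}$ denotes convex hull. *)

From HB Require Import structures.
From mathcomp Require Import all_boot all_order all_algebra.
From mathcomp Require Import all_classical all_reals all_analysis.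
Set Implicit Arguments. Unset Strict Implicit. Unset Printing Implicit Defensive.
Import Order.TTheory GRing.Theory Num.Theory.
Local Open Scope ring_scope.

Definition kappa (R : pzRingType) (k : nat) (mu : seq R) : R :=
  if (k <= size mu)%N then
    (-1) ^+ (size mu - k) *
      \sum_(I : {set 'I_(size mu)} | #|I| == (size mu - k)%N) \prod_(i in I) mu`_i
  else 0.

Definition in_conv_hull (R : realType) (V : lmodType R) (N : nat)
    (p : 'I_N -> V) (y : V) : Prop :=
  exists w : 'I_N -> R, (forall i, 0 <= w i) /\ \sum_(i < N) w i = 1 /\
    y = \sum_(i < N) w i *: p i.

From HB Require Import structures.
From mathcomp Require Import all_boot all_order all_algebra.
From mathcomp Require Import all_classical all_reals all_analysis.
From mathcomp Require Import ring lra.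
Set Implicit Arguments. Unset Strict Implicit. Unset Printing Implicit Defensive.
Import Order.TTheory GRing.Theory Num.Theory.
Import numFieldNormedType.Exports.
Local Open Scope ring_scope.

(* Order the roots as [r := rcons lam_notmax lmax] and let [q_k] be the monic
   polynomial with roots [r_0, ..., r_(k-1)]. The normalized signals
   [u_k := q_k(d/dt) x / q_k(0)] form a cascade of first-order low-pass filters
   [u_k' = -r_k (u_(k+1) - u_k)] with [u_0 = x] and [u_n = 0]. By the comparison
   principle this cascade is a positive system, so [x(t) = sum_i w_i(t) u_i(0)]
   with weights [w_i(t) >= 0] of total mass at most [1]. Measured against the
   hull generators [kappa_j x^(j)(0) / kappa_0], the coefficients of [u_i(0)] are
   proportional to [(q_i)_j / kappa_j], which is nonincreasing in [j] because
   [q_i] divides [q_(n-1)] and both have nonpositive real roots (their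
   coefficient sequences are log-concave). Abel summation then exhibits [x(t)]
   as a convex combination of [0] and the partial sums. *)

Section NonpositiveRoots.
Variable R : realDomainType.
Implicit Types (f g : {poly R}) (s t : seq R) (r : R).

Definition rootpoly s : {poly R} := \prod_(a <- s) ('X - a%:P).

Lemma rootpoly_cons a s : rootpoly (a :: s) = ('X - a%:P) * rootpoly s.
Proof. by rewrite /rootpoly big_cons. Qed.

Lemma rootpoly_cat s t : rootpoly (s ++ t) = rootpoly s * rootpoly t.
Proof. by rewrite /rootpoly big_cat. Qed.

Lemma rootpoly_perm s t : perm_eq s t -> rootpoly s = rootpoly t.
Proof. exact: perm_big. Qed.

Lemma kappa_rootpoly k s : kappa k s = (rootpoly s)`_k.
Proof.
rewrite /kappa /rootpoly; case: ifP => ks; first by rewrite coef_prod_XsubC.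
by rewrite nth_default // (size_prod_XsubC _ id) ltnNge ks.
Qed.

Lemma coefXsubCM r f j :
  (('X - r%:P) * f)`_j = (if j is j'.+1 then f`_j' else 0) - r * f`_j.
Proof. by rewrite mulrBl coefB coefXM coefCM; case: j. Qed.

Definition nneg_coef f := forall j, 0 <= f`_j.

Definition logconcave_coef f := forall i j, (i <= j)%N ->
  f`_i * f`_j.+2 <= f`_i.+1 * f`_j.+1.

(* At [i = j] this says that [f_j / g_j] is nonincreasing in [j]; the general
   form is what is preserved by [g := ('X - r%:P) * g]. *)
Definition ratio_dominated f g := forall i j, (j <= i)%N ->
  f`_i.+1 * g`_j <= f`_i * g`_j.+1.

Lemma nneg_coefXsubCM r f : r <= 0 -> nneg_coef f -> nneg_coef (('X - r%:P) * f).
Proof.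
move=> r_le0 f_ge0 [|j]; rewrite coefXsubCM.
  by have := f_ge0 0%N; nra.
by have := f_ge0 j; have := f_ge0 j.+1; nra.
Qed.

Lemma logconcave_coefXsubCM r f : r <= 0 -> nneg_coef f -> logconcave_coef f ->
  logconcave_coef (('X - r%:P) * f).
Proof.
move=> r_le0 f_ge0 f_lc i j ij; rewrite !coefXsubCM.
have c_ge0 : 0 <= - r by rewrite oppr_ge0.
have cc_ge0 := mulr_ge0 c_ge0 c_ge0.
case: i ij => [|i] ij.
  have := f_lc 0%N j (leq0n _); rewrite -subr_ge0 => /(mulr_ge0 cc_ge0).
  have := mulr_ge0 c_ge0 (mulr_ge0 (f_ge0 1%N) (f_ge0 j)).
  have := mulr_ge0 (f_ge0 0%N) (f_ge0 j).
  nra.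
have lc_skip : f`_i * f`_j.+2 <= f`_i.+2 * f`_j.
  apply: le_trans (f_lc i j (ltnW ij)) _.
  case: (ltngtP i.+1 j) ij => // [lt _|<- _]; last by rewrite mulrC.
  by case: j lt => // j lt; apply: f_lc.
have lc_adj : f`_i * f`_j.+1 <= f`_i.+1 * f`_j.
  by case: j ij {lc_skip} => [//|j] ij; apply: f_lc.
have := f_lc i.+1 j ij; rewrite -subr_ge0 => /(mulr_ge0 cc_ge0).
move: lc_skip; rewrite -subr_ge0 => /(mulr_ge0 c_ge0).
nra.
Qed.

Lemma ratio_dominated_refl f : logconcave_coef f -> ratio_dominated f f.
Proof.
move=> f_lc i j ji; case: (ltngtP j i) ji => // [lt _|-> _]; last by rewrite mulrC.
case: i lt => // i lt.
by rewrite [leLHS]mulrC [leRHS]mulrC; apply: f_lc.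
Qed.

Lemma ratio_dominatedXsubCMr r f g : r <= 0 -> nneg_coef f -> nneg_coef g ->
  ratio_dominated f g -> ratio_dominated f (('X - r%:P) * g).
Proof.
move=> r_le0 f_ge0 g_ge0 fg i j ji; rewrite !coefXsubCM.
have c_ge0 : 0 <= - r by rewrite oppr_ge0.
case: j ji => [|j] ji.
  move: (fg i 0%N ji); rewrite -subr_ge0 => /(mulr_ge0 c_ge0).
  have := mulr_ge0 (f_ge0 i) (g_ge0 0%N).
  nra.
move: (fg i j.+1 ji); rewrite -subr_ge0 => /(mulr_ge0 c_ge0).
move: (fg i j (ltnW ji)); rewrite -subr_ge0.
nra.
Qed.

Lemma nneg_coef_rootpoly s : {in s, forall a, a <= 0} -> nneg_coef (rootpoly s).
Proof.
elim: s => [|a s IH] s_le0.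
  by move=> j; rewrite /rootpoly big_nil coefC; case: j.
rewrite rootpoly_cons; apply: nneg_coefXsubCM; first by rewrite s_le0 ?mem_head.
exact/IH/(sub_in1 (fun b => @mem_behead _ (a :: s) b) s_le0).
Qed.

Lemma logconcave_coef_rootpoly s : {in s, forall a, a <= 0} ->
  logconcave_coef (rootpoly s).
Proof.
elim: s => [|a s IH] s_le0.
  by move=> i j _; rewrite /rootpoly big_nil !coefC; case: i; rewrite ?mul0r ?mulr0.
have s'_le0 := sub_in1 (fun b => @mem_behead _ (a :: s) b) s_le0.
rewrite rootpoly_cons; apply: logconcave_coefXsubCM; first by rewrite s_le0 ?mem_head.
  exact: nneg_coef_rootpoly.
exact: IH.
Qed.

Lemma ratio_dominated_rootpoly s t : {in s ++ t, forall a, a <= 0} ->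
  ratio_dominated (rootpoly s) (rootpoly (s ++ t)).
Proof.
move=> st_le0; rewrite rootpoly_cat mulrC -rootpoly_cat.
have s_le0 : {in s, forall a, a <= 0} by move=> a sa; rewrite st_le0 // mem_cat sa.
elim: t st_le0 => [|b t IH] st_le0 /=.
  exact/ratio_dominated_refl/logconcave_coef_rootpoly.
have ts_le0 : {in t ++ s, forall a, a <= 0}.
  move=> a; rewrite mem_cat => /orP[ta|sa]; apply: st_le0; rewrite mem_cat.
    by rewrite inE ta !orbT.
  by rewrite sa.
rewrite rootpoly_cons; apply: ratio_dominatedXsubCMr.
- by rewrite st_le0 // mem_cat mem_head orbT.
- exact: nneg_coef_rootpoly.
- exact: nneg_coef_rootpoly.
by apply: IH => a; rewrite mem_cat orbC -mem_cat; apply: ts_le0.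
Qed.

Lemma ratio_dominated_prefix s i : {in s, forall a, a <= 0} ->
  ratio_dominated (rootpoly (take i s)) (rootpoly s).
Proof.
by move=> s_le0; rewrite -{2}(cat_take_drop i s); apply: ratio_dominated_rootpoly;
  rewrite cat_take_drop.
Qed.

Lemma coef_rootpoly_gt0 s j : {in s, forall a, a < 0} -> (j <= size s)%N ->
  0 < (rootpoly s)`_j.
Proof.
elim: s j => [|a s IH] j s_lt0.
  by rewrite leqn0 => /eqP->; rewrite /rootpoly big_nil coefC ltr01.
have s'_lt0 := sub_in1 (fun b => @mem_behead _ (a :: s) b) s_lt0.
have a_lt0 : a < 0 by rewrite s_lt0 ?mem_head.
have s_ge0 := nneg_coef_rootpoly (fun b bs => ltW (s'_lt0 b bs)).
rewrite rootpoly_cons coefXsubCM; case: j => [_|j /= js].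
  by have := IH 0%N s'_lt0 (leq0n _); nra.
by have := IH j s'_lt0 js; have := s_ge0 j.+1; nra.
Qed.

End NonpositiveRoots.

Section ExponentialGeneratingFunction.
Variable R : realType.
Implicit Types (s u : nat -> R) (x : R).

Definition egf_coef s m := s m / m`!%:R.

Definition egf s x := limn (pseries (egf_coef s) x).

Definition exp_bounded s := exists A M : R, [/\ 0 <= A, 0 <= M &
  forall m, `|s m| <= A * M ^+ m].

Lemma exp_bounded_shift s : exp_bounded s -> exp_bounded (fun m => s m.+1).
Proof.
move=> [A [M [A_ge0 M_ge0 sAM]]]; exists (A * M), M; split => //.
  exact: mulr_ge0.
by move=> m; rewrite -mulrA -exprS.
Qed.

Lemma egf_cvg x s : exp_bounded s -> cvgn (pseries (egf_coef s) x).
Proof.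
move=> [A [M [A_ge0 M_ge0 sAM]]].
apply: normed_cvg.
apply: (@series_le_cvg _ _ (fun m => A * exp_coeff (M * `|x|) m)).
- by move=> m /=.
- by move=> m; rewrite mulr_ge0 // exp_coeff_ge0 // mulr_ge0.
- move=> m /=; rewrite /egf_coef /exp_coeff /= !normrM normfV normrX.
  rewrite [`|_%:R|]ger0_norm // exprMn mulrAC [leRHS]mulrA ler_wpM2r ?invr_ge0 //.
  by rewrite mulrA ler_wpM2r ?exprn_ge0.
- change (cvgn (series (A *: exp_coeff (M * `|x|)))).
  by rewrite seriesZ; apply: is_cvgZl_tmp; exact: is_cvg_series_exp_coeff.
Qed.

Lemma pseries_diffs_egf_coef s :
  pseries_diffs (egf_coef s) = egf_coef (fun m => s m.+1).
Proof.
apply/funext => m; rewrite /pseries_diffs /egf_coef factS natrM invfM.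
by rewrite mulrCA (mulrA m.+1%:R) mulfV ?mul1r // pnatr_eq0.
Qed.

Lemma is_derive_egf s x : exp_bounded s ->
  is_derive x (1 : R) (egf s) (egf (fun m => s m.+1) x).
Proof.
move=> s_bd; rewrite /egf -pseries_diffs_egf_coef.
apply: (@pseries_snd_diffs _ _ (`|x| + 1)).
- exact: egf_cvg.
- by rewrite pseries_diffs_egf_coef; exact/egf_cvg/(exp_bounded_shift s_bd).
- rewrite !pseries_diffs_egf_coef.
  exact/egf_cvg/(exp_bounded_shift (exp_bounded_shift s_bd)).
by rewrite [ltRHS]ger0_norm ?ltrDl // addr_ge0.
Qed.

Lemma egf_lincomb a b s u x : exp_bounded s -> exp_bounded u ->
  egf (fun m => a * s m + b * u m) x = a * egf s x + b * egf u x.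
Proof.
move=> s_bd u_bd; rewrite /egf.
have -> : pseries (egf_coef (fun m => a * s m + b * u m)) x =
    a *: pseries (egf_coef s) x + b *: pseries (egf_coef u) x.
  apply/funext => N; rewrite /pseries /series /= !fctE.
  rewrite !scaler_sumr -big_split /=; apply: eq_bigr => i _.
  by rewrite /egf_coef /GRing.scale /=; ring.
have [s_cvg u_cvg] := (egf_cvg (x := x) s_bd, egf_cvg (x := x) u_bd).
by rewrite limD ?limZl_tmp //; apply: cvgZl_tmp.
Qed.

Lemma egf_at0 s : egf s 0 = s 0%N.
Proof.
rewrite /egf; apply: lim_near_cst => //.
near=> N; rewrite /pseries /series /=.
have N_gt0 : (0 < N)%N by near: N; exists 1%N.
rewrite -(prednK N_gt0) big_nat_recl //= big1 ?addr0.
  by rewrite /egf_coef /= expr0 mulr1 divr1.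
by move=> i _; rewrite expr0n /= mulr0.
Unshelve. all: by end_near. Qed.

Lemma egf0 x : egf (fun _ => 0) x = 0.
Proof.
rewrite /egf (_ : pseries _ x = fun _ => 0) ?lim_cst //.
apply/funext => N; rewrite /pseries /series /= big1 // => i _.
by rewrite /egf_coef !mul0r.
Qed.

End ExponentialGeneratingFunction.

Section Relaxation.
Variable R : realType.

Lemma relaxation_ge0 (c : R) (f g : R -> R) : 0 <= c ->
  (forall t, is_derive t (1 : R) f (c *: (g t - f t))) ->
  (forall t, 0 <= t -> 0 <= g t) -> 0 <= f 0 ->
  forall t, 0 <= t -> 0 <= f t.
Proof.
move=> c_ge0 df g_ge0 f0_ge0 t t_ge0.
pose h s := expR (c * s) * f s.
have dh s : is_derive s (1 : R) h (c * expR (c * s) * g s).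
  apply: is_derive_eq; rewrite /GRing.scale /=; ring.
have : h 0 <= h t.
  apply: (@ger0_derive1_ndecr _ h 0 t) => //.
  - move=> s; rewrite in_itv /= => /andP[s_gt0 _].
    by rewrite derive1E derive_val mulr_ge0 ?mulr_ge0 ?expR_ge0 // g_ge0 // ltW.
  - by apply: derivable_within_continuous => s _; exact: ex_derive.
by rewrite /h mulr0 expR0 mul1r => /(le_trans f0_ge0); rewrite pmulr_rge0 ?expR_gt0.
Qed.

End Relaxation.

Section Cascade.
Variables (R : realType) (n : nat) (c : nat -> R).
Hypothesis c_ge0 : forall k, (k < n)%N -> 0 <= c k.

Definition cascade (V : normedModType R) (y : nat -> R -> V) :=
  forall k t, (k < n)%N -> is_derive t (1 : R) (y k) (c k *: (y k.+1 t - y k t)).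

Lemma cascadeB (V : normedModType R) (y z : nat -> R -> V) :
  cascade y -> cascade z -> cascade (fun k t => y k t - z k t).
Proof.
move=> dy dz k t kn; apply: is_derive_eq (is_deriveB (dy k t kn) (dz k t kn)) _.
by rewrite -scalerBr !opprD addrACA.
Qed.

Lemma cascadeZ (V : normedModType R) a (y : nat -> R -> V) :
  cascade y -> cascade (fun k t => a *: y k t).
Proof.
move=> dy k t kn; apply: is_derive_eq (is_deriveZ a (dy k t kn)) _.
by rewrite -scalerBr !scalerA mulrC.
Qed.

Lemma cascade_sum (V : normedModType R) N (y : 'I_N -> nat -> R -> V) :
  (forall i, cascade (y i)) -> cascade (fun k t => \sum_(i < N) y i k t).
Proof.
move=> dy k t kn.
have -> : (fun s => \sum_(i < N) y i k s) = \sum_(i < N) y i k.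
  by apply/funext => s; rewrite fct_sumE.
apply: is_derive_eq (is_derive_sum (fun i => dy i k t kn)) _.
by rewrite -scaler_sumr sumrB.
Qed.

Lemma cascade_mxE p q (y : nat -> R -> 'M[R]_(p, q)) a b :
  cascade y -> cascade (fun k t => y k t a b).
Proof.
move=> dy k t kn; have dyk := dy k t kn.
have yk : derivable (y k) t 1 by exact: ex_derive.
have /derivable_mxP/(_ a b) yab := yk.
apply: is_derive_eq (derivableP yab) _.
have /matrixP/(_ a b) := derive_mx yk; rewrite mxE derive_val => <-.
by rewrite !mxE.
Qed.

Lemma cascade_cst (V : normedModType R) (a : V) : cascade (fun _ _ => a).
Proof.
move=> k t kn; apply: is_derive_eq (is_derive_cst a t 1) _.
by rewrite subrr scaler0.
Qed.

Lemma cascade_ge0 (y : nat -> R -> R) : cascade y ->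
  (forall t, 0 <= t -> 0 <= y n t) -> (forall k, (k < n)%N -> 0 <= y k 0) ->
  forall k t, (k <= n)%N -> 0 <= t -> 0 <= y k t.
Proof.
move=> dy yn_ge0 y0_ge0 k t kn; rewrite -(subKn kn).
elim: (n - k)%N (leq_subr k n) t => [|d IH] dn t t_ge0; first by rewrite subn0 yn_ge0.
have kn' : (n - d.+1 < n)%N by rewrite -subn_gt0 subKn.
apply: (relaxation_ge0 (c_ge0 kn') (dy _ ^~ kn')) => //; last exact: y0_ge0.
by move=> s s_ge0; rewrite -subSn // subSS IH // ltnW.
Qed.

Lemma cascade_eq0 (y : nat -> R -> R) : cascade y ->
  (forall t, 0 <= t -> y n t = 0) -> (forall k, (k < n)%N -> y k 0 = 0) ->
  forall k t, (k <= n)%N -> 0 <= t -> y k t = 0.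
Proof.
move=> dy yn0 y00 k t kn t_ge0.
have ge0 (z : nat -> R -> R) : cascade z -> (forall s, 0 <= s -> z n s = 0) ->
    (forall k, (k < n)%N -> z k 0 = 0) -> 0 <= z k t.
  by move=> dz zn0 z00; apply: cascade_ge0 => // [s s_ge0|k' k'n]; rewrite ?zn0 ?z00.
apply/eqP; rewrite eq_le -oppr_ge0 -scaleN1r ge0 // (ge0 (fun k t => -1 *: y k t)) //.
- exact: cascadeZ.
- by move=> s s_ge0; rewrite yn0 ?scaler0.
- by move=> k' k'n; rewrite y00 ?scaler0.
Qed.

(* [cascade_coef i m k] is the [m]-th derivative at [0] of the [k]-th state of
   the cascade started from the [i]-th unit state. *)
Fixpoint cascade_coef (i m : nat) : nat -> R :=
  if m is m'.+1 then
    fun k => if (k < n)%N then c k * (cascade_coef i m' k.+1 - cascade_coef i m' k) else 0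
  else fun k => (k == i)%:R.

Definition cascade_basis i k t := egf (fun m => cascade_coef i m k) t.

Lemma cascade_coef_bounded i k : exp_bounded (fun m => cascade_coef i m k).
Proof.
pose C := \sum_(j < n) c j.
have c_le j : (j < n)%N -> c j <= C.
  move=> jn; rewrite /C (bigD1 (Ordinal jn)) //= lerDl.
  by rewrite sumr_ge0 // => j' _; apply: c_ge0.
have C_ge0 : 0 <= C by rewrite sumr_ge0 // => j _; apply: c_ge0.
exists 1, (C *+ 2); split => //; first by rewrite mulrn_wge0.
move=> m; rewrite mul1r; elim: m k => [|m IH] k /=.
  by rewrite expr0; case: (k == i); rewrite ?normr1 ?normr0.
case: ifP => kn; last by rewrite normr0 exprn_ge0 // mulrn_wge0.
rewrite normrM (ger0_norm (c_ge0 kn)) exprS mulrnAl -mulrnAr.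
apply: ler_pM => //; [exact: c_ge0 | exact: c_le |].
by rewrite mulr2n (le_trans (ler_normB _ _)) ?lerD.
Qed.

Lemma cascade_basis_cascade i : cascade (cascade_basis i).
Proof.
move=> k t kn; apply: is_derive_eq (is_derive_egf t (cascade_coef_bounded i k)) _.
have -> : (fun m => cascade_coef i m.+1 k) =
    (fun m => c k * cascade_coef i m k.+1 + (- c k) * cascade_coef i m k).
  by apply/funext => m /=; rewrite kn; ring.
rewrite egf_lincomb; try exact: cascade_coef_bounded.
by rewrite /cascade_basis /GRing.scale /=; ring.
Qed.

Lemma cascade_basis_at0 i k : cascade_basis i k 0 = (k == i)%:R.
Proof. exact: egf_at0. Qed.

Lemma cascade_basis_top i t : (i < n)%N -> cascade_basis i n t = 0.
Proof.
move=> i_lt_n; rewrite /cascade_basis (_ : (fun m => _) = fun _ => 0) ?egf0 //.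
by apply/funext => -[|m] /=; rewrite ?ltnn // gtn_eqF.
Qed.

Lemma sum_cascade_basis_at0 j (a : nat -> R) : (j < n)%N ->
  \sum_(i < n) a i * cascade_basis i j 0 = a j.
Proof.
move=> jn; rewrite (bigD1 (Ordinal jn)) //= cascade_basis_at0 eqxx mulr1.
rewrite big1 ?addr0 // => i; rewrite cascade_basis_at0 -val_eqE eq_sym /=.
by move=> /negPf ->; rewrite mulr0.
Qed.

Lemma cascade_basis_ge0 i k t : (i < n)%N -> (k <= n)%N -> 0 <= t ->
  0 <= cascade_basis i k t.
Proof.
move=> i_lt_n; apply: cascade_ge0 (cascade_basis_cascade i) _ _ k t => [s _|j _].
  by rewrite cascade_basis_top.
by rewrite cascade_basis_at0.
Qed.

Lemma sum_cascade_basis_le1 k t : (k <= n)%N -> 0 <= t ->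
  \sum_(i < n) cascade_basis i k t <= 1.
Proof.
move=> kn t_ge0; rewrite -subr_ge0.
apply: (@cascade_ge0 (fun k t => 1 - \sum_(i < n) cascade_basis i k t)) => //.
- exact/cascadeB/cascade_sum/cascade_basis_cascade/cascade_cst.
- by move=> s _; rewrite big1 ?subr0 // => i _; rewrite cascade_basis_top.
move=> j jn; have := sum_cascade_basis_at0 (fun _ => 1) jn.
by under eq_bigr do rewrite mul1r; move=> ->; rewrite subrr.
Qed.

Lemma cascade_decomposition p q (y : nat -> R -> 'M[R]_(p, q)) : cascade y ->
  (forall t, 0 <= t -> y n t = 0) ->
  forall k t, (k <= n)%N -> 0 <= t -> y k t = \sum_(i < n) cascade_basis i k t *: y i 0.
Proof.
move=> dy yn0 k t kn t_ge0; apply/matrixP => a b; apply/eqP.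
rewrite summxE -subr_eq0; under eq_bigr do rewrite mxE mulrC; apply/eqP.
apply: (@cascade_eq0 (fun k t => y k t a b - \sum_(i < n) y i 0 a b * cascade_basis i k t))
  => //.
- apply/cascadeB/cascade_sum => [|i]; first exact: cascade_mxE.
  exact/cascadeZ/cascade_basis_cascade.
- by move=> s s_ge0; rewrite yn0 // mxE big1 ?subr0 // => i _; rewrite cascade_basis_top ?mulr0.
by move=> j jn; rewrite (sum_cascade_basis_at0 (fun i => y i 0 a b) jn) subrr.
Qed.

End Cascade.

Section LinearODE.
Variables (R : realType) (V : normedModType R) (x : R -> V) (r : seq R).
Hypothesis r_lt0 : {in r, forall a, a < 0}.
Hypothesis x_derivable :
  forall k t, (k < size r)%N -> derivable (derive1n k x) t 1.
Hypothesis x_ode : forall t,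
  derive1n (size r) x t = - \sum_(k < size r) (rootpoly r)`_k *: derive1n k x t.

Definition Dq k t := \sum_(j < k.+1) (rootpoly (take k r))`_j *: derive1n j x t.

Definition cascade_state k t := ((rootpoly (take k r))`_0)^-1 *: Dq k t.

Lemma size_rootpoly_take k : (k <= size r)%N -> size (rootpoly (take k r)) = k.+1.
Proof. by move=> kr; rewrite (size_prod_XsubC _ id) size_take_min (minn_idPl kr). Qed.

Lemma rootpoly_take_succ k : (k < size r)%N ->
  rootpoly (take k.+1 r) = ('X - (r`_k)%:P) * rootpoly (take k r).
Proof.
move=> kr; rewrite (take_nth 0 kr) -cats1 rootpoly_cat mulrC.
by rewrite /rootpoly big_seq1.
Qed.

Lemma rootpoly_take_coef0_gt0 k : 0 < (rootpoly (take k r))`_0.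
Proof. by apply: coef_rootpoly_gt0 => // a /mem_take; apply: r_lt0. Qed.

Lemma is_derive_Dq k t : (k < size r)%N ->
  is_derive t (1 : R) (Dq k) (Dq k.+1 t + r`_k *: Dq k t).
Proof.
move=> kr.
have dDq : is_derive t (1 : R) (Dq k) (\sum_(j < k.+1) (rootpoly (take k r))`_j *: derive1n j.+1 x t).
  rewrite /Dq; have -> : (fun s => \sum_(j < k.+1) (rootpoly (take k r))`_j *: derive1n j x s) =
      \sum_(j < k.+1) (fun s => (rootpoly (take k r))`_j *: derive1n j x s).
    by apply/funext => s; rewrite fct_sumE.
  apply: is_derive_sum => j; apply: is_deriveZ.
  rewrite derive1nS derive1E; apply/derivableP/x_derivable.
  exact: leq_trans (ltn_ord j) kr.
apply: is_derive_eq dDq _; rewrite /Dq rootpoly_take_succ //.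
set p := rootpoly (take k r).
have p_top : p`_k.+1 = 0.
  by apply: nth_default; rewrite size_rootpoly_take ?(ltnW kr).
have shift : \sum_(i < k.+2) (if i : nat is j.+1 then p`_j else 0) *: derive1n i x t =
    \sum_(j < k.+1) p`_j *: derive1n j.+1 x t.
  by rewrite big_ord_recl scale0r add0r.
have trunc : \sum_(i < k.+2) p`_i *: derive1n i x t =
    \sum_(j < k.+1) p`_j *: derive1n j x t.
  by rewrite big_ord_recr /= p_top scale0r addr0.
under [X in X + _]eq_bigr do rewrite coefXsubCM scalerBl -scalerA.
by rewrite sumrB shift -scaler_sumr trunc subrK.
Qed.

Lemma Dq_top t : Dq (size r) t = 0.
Proof.
rewrite /Dq take_size big_ord_recr /= x_ode.
have /monicP : rootpoly r \is monic := monic_prod_XsubC r xpredT id.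
by rewrite lead_coefE (size_prod_XsubC _ id) /= => ->; rewrite scale1r addrN.
Qed.

Lemma cascade_state_cascade : cascade (size r) (fun k => - r`_k) cascade_state.
Proof.
move=> k t kr; apply: is_derive_eq (is_deriveZ _ (is_derive_Dq t kr)) _.
have rk_neq0 : r`_k != 0 by apply/ltr0_neq0/r_lt0/mem_nth.
rewrite /cascade_state rootpoly_take_succ // coefXsubCM sub0r.
rewrite scalerDr scalerA scalerBr !scalerA -scaleNr.
congr (_ + _); congr (_ *: _); first by rewrite invrN mulrN mulNr opprK invfM mulVKf.
by rewrite mulNr opprK mulrC.
Qed.

Lemma cascade_state0 t : cascade_state 0 t = x t.
Proof.
rewrite /cascade_state /Dq take0 /rootpoly big_nil coefC /= invr1 scale1r.
by rewrite big_ord1 coefC /= scale1r.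
Qed.

Lemma cascade_state_top t : cascade_state (size r) t = 0.
Proof. by rewrite /cascade_state Dq_top scaler0. Qed.

Lemma cascade_state_expand k t : (k < size r)%N -> cascade_state k t =
  \sum_(j < size r) ((rootpoly (take k r))`_j / (rootpoly (take k r))`_0) *: derive1n j x t.
Proof.
move=> kr; rewrite /cascade_state /Dq; set q := rootpoly (take k r).
rewrite scaler_sumr (big_ord_widen _ (fun j => (q`_0)^-1 *: (q`_j *: derive1n j x t)) kr).
rewrite big_mkcond; apply: eq_bigr => j _; rewrite scalerA mulrC; case: ifP => // /negbT jk.
by rewrite [q`_j]nth_default ?mul0r ?scale0r // size_rootpoly_take ?(ltnW kr) // leqNgt.
Qed.

End LinearODE.

Lemma telescope_sumrN (V : zmodType) (G : nat -> V) m N : (m <= N)%N ->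
  \sum_(m <= i < N) (G i - G i.+1) = G m - G N.
Proof.
move=> mN; rewrite -[RHS]opprB -(telescope_sumr _ mN) -sumrN.
by apply: eq_bigr => i _; rewrite opprB.
Qed.

Section ConvexHull.
Variables (R : realType) (V : lmodType R).

Lemma conv_hull_partial_sums n (Y : nat -> V) (om : nat -> R) : (0 < n)%N ->
  om 0%N <= 1 -> (forall j, (j.+1 < n)%N -> om j.+1 <= om j) -> 0 <= om n.-1 ->
  in_conv_hull (fun i : 'I_n.+1 => \sum_(0 <= j < i) Y j) (\sum_(j < n) om j *: Y j).
Proof.
move=> n_gt0 om0_le1 om_nonincr omn_ge0.
(* Abel summation: the [i]-th partial sum gets weight [om_(i-1) - om_i], with
   [om_(-1) := 1] and [om_n := 0]. *)
pose G i := if i is i'.+1 then (if (i' < n)%N then om i' else 0) else 1.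
have G_nonincr i : G i.+1 <= G i.
  case: i => [|i] /=; first by case: ifP.
  case: (ltnP i.+1 n) => [iSn|]; first by rewrite ltnW // om_nonincr.
  case: ltnP => // i_lt_n iSn; suff -> : i = n.-1 by [].
  by apply/eqP; rewrite -(eqn_add2r 1) !addn1 prednK // eqn_leq i_lt_n iSn.
exists (fun i : 'I_n.+1 => G i - G i.+1); split; first by move=> i; rewrite subr_ge0.
split.
  by rewrite -(big_mkord xpredT (fun i => G i - G i.+1)) telescope_sumrN //= ltnn subr0.
symmetry; rewrite -(big_mkord xpredT (fun i => (G i - G i.+1) *: \sum_(0 <= j < i) Y j)).
transitivity (\sum_(0 <= i < n.+1) \sum_(0 <= j < n)
    (if (j < i)%N then (G i - G i.+1) *: Y j else 0)).
  apply: eq_big_nat => i /andP[_ i_le_n]; rewrite scaler_sumr.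
  by rewrite (big_nat_widen _ _ _ _ _ (i_le_n : (i <= n)%N)) big_mkcond.
rewrite exchange_big_nat big_mkord; apply: eq_bigr => -[j jn] _ /=.
rewrite -big_mkcond -scaler_suml; congr (_ *: _).
rewrite (eq_bigl (fun i => true && (j < i)%N)) // -big_nat_widenl //.
by rewrite telescope_sumrN 1?ltnW // /G /= jn ltnn subr0.
Qed.

Lemma conv_hull_mixture n N (X : nat -> V) (K : nat -> R) (B : 'I_N -> nat -> R)
    (w : 'I_N -> R) : (0 < n)%N ->
  (forall j, (j < n)%N -> 0 < K j) -> (forall i, 0 < B i 0%N) -> (forall i j, 0 <= B i j) ->
  (forall i j, B i j.+1 * K j <= B i j * K j.+1) ->
  (forall i, 0 <= w i) -> \sum_i w i <= 1 ->
  in_conv_hull (fun i : 'I_n.+1 => \sum_(0 <= j < i) (K j / K 0%N) *: X j)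
    (\sum_i w i *: \sum_(j < n) (B i j / B i 0%N) *: X j).
Proof.
move=> n_gt0 K_gt0 B0_gt0 B_ge0 BK w_ge0 w_le1.
pose d j := K j / K 0%N; pose b i j := B i j / B i 0%N.
have d_gt0 j : (j < n)%N -> 0 < d j by move=> jn; apply: divr_gt0; apply: K_gt0.
have b_ge0 i j : 0 <= b i j := divr_ge0 (B_ge0 i j) (ltW (B0_gt0 i)).
pose om j := \sum_i w i * (b i j / d j).
have -> : \sum_i w i *: \sum_(j < n) b i j *: X j = \sum_(j < n) om j *: (d j *: X j).
  under eq_bigr do rewrite scaler_sumr; rewrite exchange_big; apply: eq_bigr => j _.
  rewrite /om scaler_suml; apply: eq_bigr => i _.
  by rewrite !scalerA -mulrA divfK // lt0r_neq0 // d_gt0.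
apply: conv_hull_partial_sums => //.
- rewrite /om /d /b divff ?lt0r_neq0 ?K_gt0 //.
  by under eq_bigr do rewrite divff ?lt0r_neq0 // divr1 mulr1.
- move=> j jn; apply: ler_sum => i _; apply: ler_wpM2l => //.
  rewrite ler_pdivrMr ?d_gt0 // mulrAC ler_pdivlMr ?d_gt0 ?(ltnW jn) //.
  rewrite /b /d mulrACA [leRHS]mulrACA ler_wpM2r ?BK //.
  by rewrite mulr_ge0 ?invr_ge0 ?ltW ?K_gt0.
- apply: sumr_ge0 => i _; rewrite mulr_ge0 ?divr_ge0 //; apply/ltW/K_gt0.
  all: by rewrite ?ltn_predL.
Qed.

End ConvexHull.

Lemma conv_hull_rcons_roots (R : realType) p q (x : R -> 'M[R]_(p, q)) (ps : seq R)
    (l t : R) :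
  {in rcons ps l, forall a, a < 0} ->
  (forall k s, (k < size (rcons ps l))%N -> derivable (derive1n k x) s 1) ->
  (forall s, derive1n (size (rcons ps l)) x s =
    - \sum_(k < size (rcons ps l)) (rootpoly (rcons ps l))`_k *: derive1n k x s) ->
  0 <= t ->
  in_conv_hull (fun i : 'I_(size (rcons ps l)).+1 =>
      \sum_(0 <= j < i) (kappa j ps / kappa 0 ps) *: derive1n j x 0) (x t).
Proof.
set r := rcons ps l => r_lt0 x_derivable x_ode t_ge0.
have ps_lt0 : {in ps, forall a, a < 0}.
  by move=> a ps_a; rewrite r_lt0 // mem_rcons inE ps_a orbT.
have r_ge0 k : (k < size r)%N -> 0 <= - r`_k.
  by move=> kr; rewrite oppr_ge0 ltW // r_lt0 // mem_nth.
rewrite -(cascade_state0 x r t).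
rewrite (cascade_decomposition r_ge0 (cascade_state_cascade r_lt0 x_derivable)
  (fun s _ => cascade_state_top x_ode s) (leq0n _) t_ge0).
under eq_bigr => i _ do rewrite (cascade_state_expand x 0 (ltn_ord i)).
apply: (conv_hull_mixture (fun j => derive1n j x 0) (K := fun j => kappa j ps)
  (B := fun i j => (rootpoly (take i r))`_j)) => [||i|i j|i j|i|].
- by rewrite size_rcons.
- move=> j; rewrite size_rcons ltnS => j_le_ps; rewrite kappa_rootpoly.
  exact: coef_rootpoly_gt0.
- exact: rootpoly_take_coef0_gt0.
- by apply: nneg_coef_rootpoly => a /mem_take /r_lt0 /ltW.
- have take_r k : (k <= size ps)%N -> take k r = take k ps.
    by move=> k_le_ps; rewrite /r -cats1 takel_cat.
  rewrite take_r; last by rewrite -ltnS -(size_rcons ps l) ltn_ord.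
  rewrite !kappa_rootpoly.
  by apply: ratio_dominated_prefix (leqnn j) => a /ps_lt0 /ltW.
- exact: cascade_basis_ge0.
- exact: sum_cascade_basis_le1.
Qed.

Theorem theorem1 (R : realType) (n m : nat) (lam : seq R)
    (x : R -> 'rV[R]_m) (lmax : R) :
  (1 <= n)%N -> (1 <= m)%N ->
  size lam = n ->
  (forall l, l \in lam -> l < 0) ->
  (* x is n times differentiable on R *)
  (forall (k : nat) (t : R), (k < n)%N -> derivable (derive1n k x) t 1) ->
  (* x solves x^(n) = - sum_{k<n} kappa_{k,lam} x^(k) *)
  (forall t : R, derive1n n x t = - \sum_(k < n) kappa k lam *: derive1n k x t) ->
  (* lmax is an entry of lam equal to max(lam_1, ..., lam_n) *)
  lmax \in lam -> (forall l, l \in lam -> l <= lmax) ->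
  forall t : R, 0 <= t ->
    in_conv_hull
      (fun i : 'I_n.+1 =>
         \sum_(0 <= j < i) (kappa j (rem lmax lam) / kappa 0 (rem lmax lam))
                              *: derive1n j x 0)
      (x t).
Proof.
move=> _ _ size_lam lam_lt0 x_derivable x_ode lmax_in _ t t_ge0.
have perm_r : perm_eq (rcons (rem lmax lam) lmax) lam.
  by rewrite perm_rcons perm_sym perm_to_rem.
have size_r : size (rcons (rem lmax lam) lmax) = n by rewrite (perm_size perm_r).
rewrite -size_r; apply: conv_hull_rcons_roots t_ge0.
- by move=> a; rewrite (perm_mem perm_r); apply: lam_lt0.
- by rewrite size_r.
- move=> s; rewrite size_r (rootpoly_perm perm_r) x_ode.
  by under eq_bigr do rewrite kappa_rootpoly.
Qed.
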